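(* Let $n\geq2$ and let $\mathcal R(P_n)=u_1,\ldots,u_r$. Let $k$ be the smallest index such that $x_{n-1}\nmid u_k$. Then $(u_1,\ldots,u_{k-1}):(u_k)=(x_{n-1})$. Moreover, if $i>k$, then $$(u_1,\ldots,u_{i-1}):(u_i)=(x_{n-1})+(u_k,\ldots,u_{i-1}):(u_i).$$
   Context: Let $K$ be a field. For $m\geq 1$, $P_m$ is the path graph on vertices $x_1,\ldots,x_m$ with edges $\{x_i,x_{i+1}\}$. The cover ideal $J(P_m)$ is generated by the monomials $\prod_{x\in C}x$ with $C$ a minimal vertex cover of $P_m$. The rooted list $\mathcal R(P_m)$ is defined recursively: $\mathcal R(P_1)$ empty; $\mathcal R(P_2)=x_1,x_2$; $\mathcal R(P_3)=x_2,x_1x_3$; $\mathcal R(P_4)=x_1x_3,x_2x_3,x_2x_4$; for $m\geq5$, if $\mathcal R(P_{m-2})=u_1,\ldots,u_r$ and $\mathcal R(P_{m-3})=v_1,\ldots,v_s$, then $\mathcal R(P_m)=x_{m-1}u_1,\ldots,x_{m-1}u_r,x_mx_{m-2}v_1,\ldots,x_mx_{m-2}v_s$; it lists each minimal monomial generator of $J(P_m)$ once. *)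

From HB Require Import structures.
From mathcomp Require Import all_boot all_algebra.
From mathcomp Require Import mpoly.
Set Implicit Arguments. Unset Strict Implicit. Unset Printing Implicit Defensive.
Import GRing.Theory.
Local Open Scope ring_scope.

(* The rooted list R(P_m), each monomial being encoded by the list of the
   (1-based) indices j of the variables x_j occurring in it (all squarefree).
   For m = p+5: R(P_m) = x_{m-1} R(P_{m-2}), x_m x_{m-2} R(P_{m-3}). *)
Fixpoint rooted (m : nat) : seq (seq nat) :=
  match m with
  | 0 => [::]
  | 1 => [::]
  | 2 => [:: [:: 1%N]; [:: 2%N]]
  | 3 => [:: [:: 2%N]; [:: 1%N; 3%N]]
  | 4 => [:: [:: 1%N; 3%N]; [:: 2%N; 3%N]; [:: 2%N; 4%N]]
  | S (S ((S ((S (S _)) as r)) as q)) as m' =>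
      map (cons m'.-1) (rooted q) ++ map (fun s => m' :: m'.-2 :: s) (rooted r)
  end.

(* The variable x_j (1 <= j <= n) of K[x_1,...,x_n] = {mpoly K[n]},
   x_j being 'X_(j-1); out-of-range indices are never used. *)
Definition var (K : fieldType) (n j : nat) : {mpoly K[n]} :=
  match @insub nat (fun i => i < n)%N _ j.-1 with
  | Some i => 'X_i
  | None => 0
  end.

Definition mono (K : fieldType) (n : nat) (s : seq nat) : {mpoly K[n]} :=
  \prod_(j <- s) var K n j.

Definition rootedR (K : fieldType) (n : nat) : seq {mpoly K[n]} :=
  map (mono K n) (rooted n).

Definition ideal_gen (R : comNzRingType) (gs : seq R) : R -> Prop :=
  fun f => exists c : 'I_(size gs) -> R, f = \sum_(i < size gs) c i * gs`_i.

Definition ideal_colon (R : comNzRingType) (I J : R -> Prop) : R -> Prop :=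
  fun f => forall g, J g -> I (f * g).

Definition ideal_sum (R : comNzRingType) (I J : R -> Prop) : R -> Prop :=
  fun f => exists a b, I a /\ J b /\ f = a + b.

Definition ideal_eq (R : comNzRingType) (I J : R -> Prop) : Prop :=
  forall f, I f <-> J f.

Definition rdvd (R : comNzRingType) (a b : R) : Prop := exists q, b = a * q.

From HB Require Import structures.
From mathcomp Require Import all_boot all_algebra.
From mathcomp Require Import mpoly zify.
Set Implicit Arguments. Unset Strict Implicit. Unset Printing Implicit Defensive.

(* For n >= 5, R(P_n) is x_(n-1) R(P_(n-2)) followed by x_n x_(n-2) R(P_(n-3)): the
   generators divisible by x_(n-1) form exactly the prefix u_1, ..., u_(k-1).  Every later
   u_i = x_n x_(n-2) v has a prefix element dividing x_(n-1) u_i, namely x_(n-1) w with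
   w in R(P_(n-2)) dividing x_(n-2) v (either x_(n-2) v itself or v lies in R(P_(n-2))).
   For monomial ideals, f lies in (A) : (u) iff every monomial t of f has some a in A
   dividing u t.  If x_(n-1) divides all of A but not u, and some a in A divides
   x_(n-1) u, then "some a in A divides u t" just says "x_(n-1) divides t", and both
   colon identities follow by comparing supports monomial by monomial. *)

Lemma partition_nth_notP (T : Type) (x0 : T) (P : pred T) (s : seq T) j i :
  s = filter P s ++ filter (predC P) s -> j <= i < size s ->
  ~~ P (nth x0 s j) -> ~~ P (nth x0 s i).
Proof.
move=> sE /andP[le_ji lt_is]; rewrite sE !nth_cat.
have sizeE : size s = size (filter P s) + size (filter (predC P) s).
  by rewrite {1}sE size_cat.
case: ltnP => [lt_jA | le_Aj]; first by rewrite (all_nthP x0 (filter_all P s)).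
rewrite ltnNge (leq_trans le_Aj le_ji) /=.
by move=> _; move/(all_nthP x0): (filter_all (predC P) s); apply; lia.
Qed.

Lemma rootedS m : rooted m.+4.+1 =
  map (cons m.+4) (rooted m.+3) ++ map (fun s => m.+4.+1 :: m.+3 :: s) (rooted m.+2).
Proof. by []. Qed.

Definition vertex_list (m : nat) (s : seq nat) := uniq s && all (fun j => 0 < j <= m) s.

Lemma vertex_list_cons m m' j s :
  m < j <= m' -> vertex_list m s -> vertex_list m' (j :: s).
Proof.
move=> /andP[lt_mj le_jm'] /andP[us /allP rs]; apply/andP; split=> /=.
  by rewrite us andbT; apply/negP => /rs; lia.
by apply/andP; split; [lia | apply/allP => x /rs; lia].
Qed.

Lemma rooted_vertex_list m : all (vertex_list m) (rooted m).
Proof.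
elim/ltn_ind: m => m IH; case: m IH => [|[|[|[|[|m]]]]] IH //.
rewrite rootedS all_cat !all_map; apply/andP; split; apply/allP => s sR /=.
- apply: (vertex_list_cons (m := m.+3)); first lia.
  exact: (allP (IH m.+3 ltac:(lia)) _ sR).
- apply: (vertex_list_cons (m := m.+4)); first lia.
  apply: (vertex_list_cons (m := m.+2)); first lia.
  exact: (allP (IH m.+2 ltac:(lia)) _ sR).
Qed.

Lemma rooted_partition m :
  rooted m = [seq s <- rooted m | m.-1 \in s] ++ [seq s <- rooted m | m.-1 \notin s].
Proof.
case: m => [|[|[|[|[|m]]]]] //; rewrite rootedS !filter_cat !filter_map.
have notin_tail : {in rooted m.+2, forall s, m.+4 \notin [:: m.+4.+1, m.+3 & s]}.
  move=> s /(allP (rooted_vertex_list _)) /andP[_ /allP rs].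
  by rewrite !inE !negb_or; apply/and3P; split; [lia | lia | apply/negP => /rs; lia].
rewrite (@eq_in_filter _ _ predT) => [|s _]; last by rewrite /= mem_head.
rewrite (@eq_in_filter _ (preim _ _) pred0) => [|s /notin_tail /negbTE //].
rewrite (@eq_in_filter _ (preim _ _) pred0) => [|s _]; last by rewrite /= mem_head.
rewrite (@eq_in_filter _ (preim _ _) predT) => [|s /notin_tail //].
by rewrite !filter_predT !filter_pred0 cats0.
Qed.

Lemma rooted_succ m v :
  v \in rooted m -> exists2 w, w \in rooted m.+1 & {subset w <= m.+1 :: v}.
Proof.
move=> vR; have [le_m5 | lt5m] := leqP m 5.
  suff /allP /(_ v vR) /hasP [w wR /allP] :
    all (fun v => has (fun w => all (mem (m.+1 :: v)) w) (rooted m.+1)) (rooted m) by exists w.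
  by case: m {vR} le_m5 => [|[|[|[|[|[|]]]]]].
case: m lt5m vR => [|[|[|[|[|[|m]]]]]] // _.
rewrite rootedS mem_cat => /orP[] /mapP [u uR ->].
- exists [:: m.+4.+3, m.+4.+1 & u] => //.
  by rewrite rootedS mem_cat (map_f (fun s => m.+4.+3 :: m.+4.+1 :: s)) ?orbT.
- exists [:: m.+4.+2, m.+4 & u] => [|j jv]; last by rewrite inE jv orbT.
  by rewrite rootedS mem_cat (map_f (cons m.+4.+2)) // rootedS mem_cat map_f.
Qed.

Lemma rooted_lift m s : s \in rooted m -> m.-1 \notin s ->
  exists2 w, w \in rooted m & m.-1 \in w /\ {subset w <= m.-1 :: s}.
Proof.
move=> sR; have [le_m4 | lt4m] := leqP m 4.
  suff /allP /(_ s sR) /implyP H : all (fun s => (m.-1 \notin s) ==>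
      has (fun w => (m.-1 \in w) && all (mem (m.-1 :: s)) w) (rooted m)) (rooted m).
    by move=> /H /hasP [w wR /andP[inw /allP sub]]; exists w.
  by case: m {sR} le_m4 => [|[|[|[|[|]]]]].
case: m lt4m sR => [|[|[|[|[|m]]]]] // _.
rewrite rootedS mem_cat => /orP[] /mapP [v vR ->]; first by rewrite mem_head.
have [w wR sub_wv] := rooted_succ vR.
exists (m.+4 :: w); first by rewrite mem_cat map_f.
split=> [|j]; first exact: mem_head.
by rewrite !inE => /orP[-> // | /sub_wv]; rewrite !inE => /orP[] ->; rewrite ?orbT.
Qed.

Lemma rooted_tail m k j : k <= j < size (rooted m) ->
  m.-1 \notin nth [::] (rooted m) k ->
  m.-1 \notin nth [::] (rooted m) j /\
  exists2 l, l < k & {subset nth [::] (rooted m) l <= m.-1 :: nth [::] (rooted m) j}.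
Proof.
move=> /andP[le_kj lt_jm] notin_k.
have late i : k <= i < size (rooted m) -> m.-1 \notin nth [::] (rooted m) i.
  by move=> lt_ki; exact: (partition_nth_notP (rooted_partition m)) lt_ki notin_k.
have notin_j := late j ltac:(lia); split=> //.
have [w wR [inw sub_w]] := rooted_lift (mem_nth [::] lt_jm) notin_j.
exists (index w (rooted m)); last by rewrite nth_index.
rewrite ltnNge; apply/negP => le_kw.
by have := late (index w (rooted m)); rewrite le_kw index_mem wR nth_index // inw => /(_ isT).
Qed.

Import GRing.Theory.
Local Open Scope ring_scope.

Section IdealGen.
Variable R : comNzRingType.
Implicit Types (gs : seq R) (a b r : R).

Lemma ideal_gen0 gs : ideal_gen gs 0.
Proof. by exists (fun _ => 0); rewrite big1 // => i _; rewrite mul0r. Qed.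

Lemma ideal_genD gs a b : ideal_gen gs a -> ideal_gen gs b -> ideal_gen gs (a + b).
Proof.
move=> [c ->] [d ->]; exists (fun i => c i + d i).
by rewrite -big_split; apply: eq_bigr => i _; rewrite mulrDl.
Qed.

Lemma ideal_genMl gs r a : ideal_gen gs a -> ideal_gen gs (r * a).
Proof.
move=> [c ->]; exists (fun i => r * c i).
by rewrite mulr_sumr; apply: eq_bigr => i _; rewrite mulrA.
Qed.

Lemma mem_ideal_gen gs g : g \in gs -> ideal_gen gs g.
Proof.
move=> gs_g; have lt_g : (index g gs < size gs)%N by rewrite index_mem.
exists (fun i : 'I_(size gs) => (val i == index g gs)%:R).
rewrite (bigD1 (Ordinal lt_g)) //= eqxx mul1r nth_index // big1 ?addr0 //.
by move=> i; rewrite -val_eqE /= => /negbTE ->; rewrite mul0r.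
Qed.

Lemma ideal_gen1_rdvd a b : rdvd a b -> ideal_gen [:: a] b.
Proof. by move=> [q ->]; exists (fun _ => q); rewrite big_ord1 mulrC. Qed.

End IdealGen.

Section MonomialIdeals.
Variables (R : comNzRingType) (n : nat).
Implicit Types (f : {mpoly R[n]}) (G : seq 'X_{1..n}) (q t : 'X_{1..n}).
Local Notation X := (@mpolyX n R).

Definition mfilter (P : pred 'X_{1..n}) f : {mpoly R[n]} :=
  \sum_(t <- msupp f) (if P t then f@_t else 0) *: 'X_[t].

Lemma mcoeff_mfilter P f t : (mfilter P f)@_t = if P t then f@_t else 0.
Proof.
rewrite /mfilter raddf_sum /=.
under eq_bigr => u _ do rewrite mcoeffZ mcoeffX.
have [f_t | nf_t] := boolP (t \in msupp f).
  rewrite (bigD1_seq t) ?msupp_uniq //= eqxx mulr1 big1 ?addr0 // => u.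
  by move=> /negbTE ->; rewrite mulr0.
rewrite big1_seq => [|u u_f]; last by rewrite (negbTE (memPn nf_t u u_f)) mulr0.
by move: nf_t; rewrite mcoeff_msupp negbK => /eqP ->; case: (P t).
Qed.

Lemma monomial_idealP G f :
  ideal_gen (map X G) f <-> {subset msupp f <= [pred t | has (fun g => g <= t)%MM G]}.
Proof.
split=> [[c ->] | sub_f].
  apply: (big_ind (fun p => {subset msupp p <= _})) => [t | p p' sub_p sub_p' t | i _ t].
  - by rewrite msupp0.
  - by move/msuppD_le; rewrite mem_cat => /orP[/sub_p | /sub_p'].
  have lt_i : (i < size G)%N by rewrite -(size_map X) ltn_ord.
  rewrite (nth_map 0%MM) // (perm_mem (msuppMX _ _)) => /mapP [u _ ->].
  by apply/hasP; exists (nth 0%MM G i); rewrite ?mem_nth ?lem_addr.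
rewrite (mpolyE f) big_seq; apply: big_ind => [|p p'|t /sub_f /hasP [g G_g le_gt]].
- exact: ideal_gen0.
- exact: ideal_genD.
have -> : f@_t *: X t = (f@_t *: X (t - g)%MM) * X g.
  by rewrite -scalerAl -mpolyXD submK.
by apply/ideal_genMl/mem_ideal_gen/map_f.
Qed.

Lemma monomial_colonP G q f :
  ideal_colon (ideal_gen (map X G)) (ideal_gen [:: X q]) f <->
  {subset msupp f <= [pred t | has (fun g => g <= q + t)%MM G]}.
Proof.
split=> [colon_f t f_t | sub_f g [c ->]].
  have /monomial_idealP sub_fq := colon_f _ (mem_ideal_gen (mem_head (X q) [::])).
  by apply: sub_fq; rewrite (perm_mem (msuppMX _ _)) map_f.
rewrite big_ord1 /= mulrCA; apply/ideal_genMl/monomial_idealP => u.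
by rewrite (perm_mem (msuppMX _ _)) => /mapP [t /sub_f le_t ->].
Qed.

Lemma ideal_sum_suppP (P Q : pred 'X_{1..n}) (I J : {mpoly R[n]} -> Prop) :
  (forall f, I f <-> {subset msupp f <= P}) ->
  (forall f, J f <-> {subset msupp f <= Q}) ->
  forall f, ideal_sum I J f <-> {subset msupp f <= predU P Q}.
Proof.
move=> IP JQ f; split=> [[a [b [/IP sub_a [/JQ sub_b ->]]]] t | sub_f].
  move/msuppD_le; rewrite mem_cat => /orP[/sub_a P_t | /sub_b Q_t].
  - by apply/orP; left.
  - by apply/orP; right.
exists (mfilter P f), (f - mfilter P f); split; [|split]; last by rewrite addrC subrK.
- by apply/IP => t; rewrite mcoeff_msupp mcoeff_mfilter; case: ifP; rewrite ?eqxx.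
apply/JQ => t; rewrite mcoeff_msupp mcoeffB mcoeff_mfilter.
case: ifP => [_ | /negbT nP_t]; first by rewrite subrr eqxx.
by rewrite subr0 -mcoeff_msupp => /sub_f /orP[/(negP nP_t) | ].
Qed.

Lemma rdvd_mpolyX a b : rdvd (X a) (X b) <-> (a <= b)%MM.
Proof.
split=> [/ideal_gen1_rdvd /(monomial_idealP [:: a]) sub_ab | le_ab].
  by have := sub_ab b; rewrite msuppX mem_head inE /= orbF => /(_ isT).
by exists (X (b - a)%MM); rewrite -mpolyXD addmC submK.
Qed.

Section ColonByVariable.
Variables (i : 'I_n) (A : seq 'X_{1..n}) (q : 'X_{1..n}).
Hypotheses (A_div : all (fun a => U_(i) <= a)%MM A) (q_ndiv : ~~ (U_(i) <= q)%MM)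
  (A_lift : has (fun a => a <= U_(i) + q)%MM A).

Lemma has_le_add_var t : has (fun a => a <= q + t)%MM A = (U_(i) <= t)%MM.
Proof.
apply/hasP/idP => [[a A_a le_a] | le_it].
  have /lepm_trans /(_ le_a) := allP A_div a A_a.
  by move: q_ndiv; rewrite !lep1mP mnmDE negbK => /eqP ->.
have [a A_a le_a] := hasP A_lift; exists a => //.
apply: (lepm_trans le_a); apply/mnm_lepP => j.
by rewrite !mnmDE addnC leq_add2l; move/mnm_lepP: le_it.
Qed.

Lemma colon_var :
  ideal_eq (ideal_colon (ideal_gen (map X A)) (ideal_gen [:: X q]))
           (ideal_gen [:: X U_(i)%MM]).
Proof.
move=> f; split=> [/monomial_colonP sub_f | /(monomial_idealP [:: U_(i)%MM]) sub_f].
  by apply/(monomial_idealP [:: U_(i)%MM]) => t /sub_f; rewrite !inE /= has_le_add_var orbF.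
by apply/monomial_colonP => t /sub_f; rewrite !inE /= has_le_add_var orbF.
Qed.

Lemma colon_cat_var B :
  ideal_eq (ideal_colon (ideal_gen (map X (A ++ B))) (ideal_gen [:: X q]))
           (ideal_sum (ideal_gen [:: X U_(i)%MM])
                      (ideal_colon (ideal_gen (map X B)) (ideal_gen [:: X q]))).
Proof.
move=> f; have sumP := ideal_sum_suppP (monomial_idealP [:: U_(i)%MM]) (monomial_colonP B q) f.
split=> [/monomial_colonP sub_f | /sumP sub_f].
  by apply/sumP => t /sub_f; rewrite !inE /= has_cat has_le_add_var orbF.
by apply/monomial_colonP => t /sub_f; rewrite !inE /= has_cat has_le_add_var orbF.
Qed.

End ColonByVariable.

End MonomialIdeals.

Section RootedMonomials.
Variables (K : fieldType) (n : nat).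

Definition mon (s : seq nat) : 'X_{1..n} := [multinom count_mem i.+1 s | i < n].

Lemma mon_cons j s : mon (j :: s) = (mon [:: j] + mon s)%MM.
Proof. by apply/mnmP => i; rewrite mnmDE !mnmE /= addn0. Qed.

Lemma mon_ord (i : 'I_n) : mon [:: i.+1] = U_(i)%MM.
Proof. by apply/mnmP => k; rewrite mnmE mnm1E /= addn0 eqSS. Qed.

Lemma lep1m_mon (i : 'I_n) s : (U_(i) <= mon s)%MM = (i.+1 \in s).
Proof. by rewrite lep1mP mnmE -lt0n -has_count has_pred1. Qed.

Lemma mon_le w s : uniq w -> {subset w <= s} -> (mon w <= mon s)%MM.
Proof.
move=> uw sub_ws; apply/mnm_lepP => i; rewrite !mnmE count_uniq_mem //.
by case: (boolP (i.+1 \in w)) => // /sub_ws; rewrite -has_pred1 has_count.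
Qed.

Lemma var_ord (i : 'I_n) : var K n i.+1 = 'X_[U_(i)].
Proof. by rewrite /var /= valK. Qed.

Lemma mono_mon s : all (fun j => 0 < j <= n)%N s -> mono K n s = 'X_[mon s].
Proof.
elim: s => [|j s IH] /=.
  by rewrite /mono big_nil (_ : mon [::] = 0%MM) ?mpolyX0.
move=> /andP[/andP[j_gt0 j_le_n] /IH mono_s].
have lt_j : (j.-1 < n)%N by lia.
rewrite /mono big_cons -/(mono K n s) mono_s mon_cons.
have -> : j = (Ordinal lt_j).+1 by rewrite /= prednK.
by rewrite var_ord mon_ord mpolyXD.
Qed.

Lemma rootedR_mpolyX : rootedR K n = map (@mpolyX n K) (map mon (rooted n)).
Proof.
rewrite /rootedR -map_comp; apply/eq_in_map => s.
by move=> /(allP (rooted_vertex_list n)) /andP[_]; exact: mono_mon.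
Qed.

Local Notation M := (map mon (rooted n)).

Lemma rooted_mon_tail (i : 'I_n) k j : n.-1 = i.+1 -> (k <= j < size M)%N ->
  ~~ (U_(i) <= nth 0%MM M k)%MM ->
  ~~ (U_(i) <= nth 0%MM M j)%MM && has (fun a => a <= U_(i) + nth 0%MM M j)%MM (take k M).
Proof.
rewrite size_map => iE kj; have /andP[le_kj lt_jS] := kj.
have lt_kS := leq_ltn_trans le_kj lt_jS.
rewrite !(nth_map [::]) // !lep1m_mon -iE => notin_k.
have [-> [l lt_lk sub_l]] := rooted_tail kj notin_k.
have lt_lS := ltn_trans lt_lk lt_kS.
apply/hasP; exists (nth 0%MM M l).
  by rewrite -(nth_take _ lt_lk) mem_nth // size_takel // size_map ltnW.
rewrite (nth_map [::]) // -mon_ord -iE -mon_cons; apply: mon_le sub_l.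
by have /allP /(_ _ (mem_nth [::] lt_lS)) /andP[] := rooted_vertex_list n.
Qed.

End RootedMonomials.

Theorem lemma3p6 (K : fieldType) (n : nat) (hn : (2 <= n)%N) (k : nat) :
  let U := rootedR K n in
  let x := var K n n.-1 in
  (k < size U)%N ->
  ~ rdvd x (nth 0 U k) ->
  (forall j, (j < k)%N -> rdvd x (nth 0 U j)) ->
  ideal_eq (ideal_colon (ideal_gen (take k U)) (ideal_gen [:: nth 0 U k]))
           (ideal_gen [:: x])
  /\
  (forall i, (k < i)%N -> (i < size U)%N ->
     ideal_eq (ideal_colon (ideal_gen (take i U)) (ideal_gen [:: nth 0 U i]))
              (ideal_sum (ideal_gen [:: x])
                 (ideal_colon (ideal_gen (drop k (take i U)))
                              (ideal_gen [:: nth 0 U i])))).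
Proof.
move=> U x lt_kU ndvd_k dvd_lt.
have lt_i : (n.-2 < n)%N by lia.
have [i iE] : exists i : 'I_n, n.-1 = i.+1 by exists (Ordinal lt_i) => /=; lia.
set M := map (mon n) (rooted n).
have UE : U = map (@mpolyX n K) M := rootedR_mpolyX K n.
have xE : x = 'X_[U_(i)] by rewrite /x iE var_ord.
have sizeU : size U = size M by rewrite UE size_map.
have nthU j : (j < size M)%N -> nth 0 U j = 'X_[nth 0%MM M j].
  by move=> lt_jM; rewrite UE (nth_map 0%MM).
have A_div : all (fun a => U_(i) <= a)%MM (take k M).
  apply/(all_nthP 0%MM) => j; rewrite size_takel => [lt_jk|]; last by rewrite -sizeU ltnW.
  have lt_jM : (j < size M)%N by rewrite -sizeU (ltn_trans lt_jk).
  by rewrite nth_take //; apply/(@rdvd_mpolyX K); rewrite -nthU // -xE; exact: dvd_lt.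
have ndiv_k : ~~ (U_(i) <= nth 0%MM M k)%MM.
  by apply/negP => /(@rdvd_mpolyX K); rewrite -nthU -?sizeU // -xE.
split.
  rewrite xE nthU -?sizeU // UE -map_take.
  have kk : (k <= k < size M)%N by rewrite leqnn -sizeU.
  by have /andP[q_ndiv A_lift] := rooted_mon_tail iE kk ndiv_k; exact: colon_var.
move=> j lt_kj lt_jU; rewrite xE nthU -?sizeU // UE -map_take -map_drop.
have kj : (k <= j < size M)%N by rewrite (ltnW lt_kj) -sizeU.
have /andP[q_ndiv A_lift] := rooted_mon_tail iE kj ndiv_k.
have := colon_cat_var A_div q_ndiv A_lift (drop k (take j M)).
by rewrite -(@take_takel _ k j M) ?cat_take_drop // ltnW.
Qed.
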